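(* Let $\mathcal I=\mathbb R^d$, $\mathcal T$ its unit sphere, $\mathcal G$ a compact Abelian group with normalized Haar measure $dg$ acting on $\mathcal I$ by a unitary representation, and $\mathcal G_0\subset\mathcal G$ measurable with $V=\int_{\mathcal G_0}dg>0$. Let $\bar\Psi(I):\mathcal G\times\mathcal T\to\mathcal P(\mathbb R)$, $\bar\Psi(I)(g,t)=(\rho_{I,g})^t$, where $\rho_{I,\bar g}(A)=\frac1V\int_{\{g\in\bar g\mathcal G_0:\ gI\in A\}}dg$ and $\rho^t$ is the pushforward of $\rho$ under $I\mapsto\langle I,t\rangle$. Let $\mathcal H$ be a real separable Hilbert space and $\Phi:\mathcal P(\mathbb R)\to\mathcal H$ an embedding, and define $J_\Phi(h)(g,t)=\Phi(h(g,t))$ for $h:\mathcal G\times\mathcal T\to\mathcal P(\mathbb R)$. Let $\bar Q=J_\Phi\circ\bar\Psi$, viewed as a map from $\mathcal I$ to $L^2(\mathcal G\times\mathcal T,\mathcal H)$. Then $\bar Q$ is covariant: $\bar Q(gI)=g\bar Q(I)$ for all $I\in\mathcal I$, $g\in\mathcal G$.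
   Context: $\mathcal P(\mathbb R)$ is the set of Borel probability measures on $\mathbb R$. $L^2(\mathcal G\times\mathcal T,\mathcal H)$ is the space of maps $h:\mathcal G\times\mathcal T\to\mathcal H$ with $\int\|h(g,t)\|^2\,dg\,du(t)<\infty$, $u$ the normalized uniform measure on $\mathcal T$. The action of $\tilde g\in\mathcal G$ on maps $h$ defined on $\mathcal G\times\mathcal T$ is $(\tilde gh)(g,t)=h(\tilde gg,t)$. *)

From HB Require Import structures.
From mathcomp Require Import all_boot all_order all_algebra.
From mathcomp Require Import all_classical all_reals all_analysis.
Set Implicit Arguments. Unset Strict Implicit. Unset Printing Implicit Defensive.
Import Order.TTheory GRing.Theory Num.Theory.
Import numFieldNormedType.Exports.
Local Open Scope classical_set_scope.
Local Open Scope ring_scope.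

Definition borelG (G : ptopologicalType) := g_sigma_algebraType (@open G).

(* Borel subsets of R (R carries its canonical Borel measurable structure). *)
Definition borelR (R : realType) := {A : set R | measurable A}.

Definition is_probR (R : realType) (m : borelR R -> \bar R) : Prop :=
  (forall A, (0 <= m A)%E) /\
  (forall (mT : measurable (setT : set R)), m (exist _ setT mT) = 1%E) /\
  (forall (F : nat -> set R) (A : set R)
          (mF : forall n, measurable (F n)) (mA : measurable A),
     trivIset setT F -> A = \bigcup_n F n ->
     ((fun n => \sum_(0 <= k < n) m (exist _ (F k) (mF k)))%E @ \oo
        --> m (exist _ A mA))).

Definition inner (R : realType) (d : nat) (x t : 'cV[R]_d) : R := (x^T *m t) 0 0.

Definition unit_sphere (R : realType) (d : nat) : set 'cV[R]_d :=
  [set t | inner t t = 1].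

Definition coset (G : Type) (mul : G -> G -> G) (gb : G) (G0 : set G) : set G :=
  [set g | exists2 x, G0 x & g = mul gb x].

Definition rho (R : realType) (d : nat) (G : ptopologicalType)
  (mu : probability (borelG G) R) (mul : G -> G -> G) (pi : G -> 'M[R]_d)
  (G0 : set G) (I : 'cV[R]_d) (gb : G) : set 'cV[R]_d -> \bar R :=
  fun A => (((fine (mu G0))^-1)%:E * mu [set g | coset mul gb G0 g /\ A (pi g *m I)])%E.

Definition push_inner (R : realType) (d : nat) (r : set 'cV[R]_d -> \bar R)
  (t : 'cV[R]_d) : set R -> \bar R :=
  fun B => r [set x | B (inner x t)].

Definition Psibar (R : realType) (d : nat) (G : ptopologicalType)
  (mu : probability (borelG G) R) (mul : G -> G -> G) (pi : G -> 'M[R]_d)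
  (G0 : set G) (I : 'cV[R]_d) : G -> 'cV[R]_d -> (borelR R -> \bar R) :=
  fun g t B => push_inner (rho mu mul pi G0 I g) t (sval B).

Definition JPhi (R : realType) (d : nat) (G : Type) (H : Type)
  (Phi : (borelR R -> \bar R) -> H) (h : G -> 'cV[R]_d -> (borelR R -> \bar R)) :
  G -> 'cV[R]_d -> H := fun g t => Phi (h g t).

Definition Qbar (R : realType) (d : nat) (G : ptopologicalType) (H : Type)
  (mu : probability (borelG G) R) (mul : G -> G -> G) (pi : G -> 'M[R]_d)
  (G0 : set G) (Phi : (borelR R -> \bar R) -> H) (I : 'cV[R]_d) :
  G -> 'cV[R]_d -> H :=
  JPhi Phi (Psibar mu mul pi G0 I).

From HB Require Import structures.
From mathcomp Require Import all_boot all_order all_algebra.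
From mathcomp Require Import all_classical all_reals all_analysis.
From mathcomp Require Import measurable_realfun.
Set Implicit Arguments. Unset Strict Implicit. Unset Printing Implicit Defensive.
Import Order.TTheory GRing.Theory Num.Theory.
Import numFieldNormedType.Exports.
Local Open Scope classical_set_scope.
Local Open Scope ring_scope.

(* Left translation by g maps the set of h in g' G0 with h (g I) in A onto
   the set of k in g g' G0 with k I in A (commutativity gives h g = g h), so
   translation invariance of the Haar measure gives rho_{gI, g'} = rho_{I, gg'}.
   The only analytic input is that these sets are Borel, which follows from
   the continuity of the group operations and of the representation. *)

Definition rho_set (R : realType) (d : nat) (G : Type) (mul : G -> G -> G)
    (pi : G -> 'M[R]_d) (G0 : set G) (I : 'cV[R]_d) (gb : G)
    (A : set 'cV[R]_d) : set G :=
  [set g | coset mul gb G0 g /\ A (pi g *m I)].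

Section AbelianGroup.
Variables (G : Type) (mul : G -> G -> G) (inv : G -> G) (one : G).
Hypothesis mulA : forall x y z, mul x (mul y z) = mul (mul x y) z.
Hypothesis mulC : forall x y, mul x y = mul y x.
Hypothesis mul1g : forall x, mul one x = x.
Hypothesis mulVg : forall x, mul (inv x) x = one.

Lemma mulKg g : cancel (mul g) (mul (inv g)).
Proof. by move=> x; rewrite mulA mulVg mul1g. Qed.

Lemma mulKVg g : cancel (mul (inv g)) (mul g).
Proof. by move=> x; rewrite mulA (mulC g) mulVg mul1g. Qed.

Lemma image_mul g (A : set G) : mul g @` A = [set k | A (mul (inv g) k)].
Proof.
apply/seteqP; split=> k /=; first by move=> [a Aa <-]; rewrite mulKg.
by move=> Ak; exists (mul (inv g) k); rewrite ?mulKVg.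
Qed.

Lemma coset_mulV g g' (G0 : set G) k :
  coset mul g' G0 (mul (inv g) k) = coset mul (mul g g') G0 k.
Proof.
apply/propext; split=> -[x G0x kE]; exists x => //.
  by rewrite -mulA -kE mulKVg.
by rewrite kE -mulA mulKg.
Qed.

Variables (R : realType) (d : nat) (pi : G -> 'M[R]_d).
Hypothesis pi_mul : forall g h, pi (mul g h) = pi g *m pi h.

Lemma image_rho_set (G0 : set G) (I : 'cV[R]_d) g g' (A : set 'cV[R]_d) :
  mul g @` rho_set mul pi G0 (pi g *m I) g' A =
    rho_set mul pi G0 I (mul g g') A.
Proof.
rewrite image_mul; apply/seteqP; split=> k; rewrite /rho_set /=;
  by rewrite coset_mulV mulmxA -pi_mul (mulC _ g) mulKVg.
Qed.

End AbelianGroup.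

Section TopologicalGroup.
Variable G : ptopologicalType.

Lemma open_measurable_borelG (A : set G) : open A ->
  @measurable _ (borelG G) A.
Proof. exact: sub_sigma_algebra. Qed.

Lemma continuous_measurable_borelG (G' : ptopologicalType) (f : G -> G') :
  continuous f -> @measurable_fun _ _ (borelG G) (borelG G') setT f.
Proof.
move=> /continuousP cf.
apply: (@measurability _ _ (borelG G) (borelG G') setT f (@open G') erefl).
by move=> _ [A oA <-]; rewrite setTI; apply: open_measurable_borelG; exact: cf.
Qed.

Lemma continuous_measurable_borelG_R (R : realType) (f : G -> R) :
  continuous f -> @measurable_fun _ _ (borelG G) R setT f.
Proof.
move=> /continuousP cf; apply: (measurability _ (RGenOpens.measurableE R)).
move=> _ [_ [a [b ->]] <-]; rewrite setTI.
by apply: open_measurable_borelG; apply/cf/interval_open.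
Qed.

Lemma continuous_sum (R : realType) (J : Type) (r : seq J) (F : J -> G -> R) :
  (forall j, continuous (F j)) -> continuous (fun x => \sum_(j <- r) F j x).
Proof.
move=> cF; elim: r => [|a r IH].
  by under eq_fun do rewrite big_nil; exact: cst_continuous.
under eq_fun do rewrite big_cons.
by move=> x; exact: (continuousD (cF a x) (IH x)).
Qed.

Lemma continuous_inner_rep (R : realType) (d : nat) (pi : G -> 'M[R]_d)
    (J t : 'cV[R]_d) :
  (forall i j, continuous (fun g => pi g i j)) ->
  continuous (fun g => inner (pi g *m J) t).
Proof.
move=> pi_cont.
have -> : (fun g => inner (pi g *m J) t) = fun g =>
    \sum_(k <- index_enum 'I_d)
      (\sum_(j <- index_enum 'I_d) pi g k j * J j 0) * t k 0.
  by apply/funext => g; rewrite /inner mxE; apply: eq_bigr => k _; rewrite !mxE.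
apply: continuous_sum => k g; apply: cvgM; last exact: cvg_cst.
by apply: continuous_sum => j h; apply: cvgM; [exact: pi_cont | exact: cvg_cst].
Qed.

Variables (mul : G -> G -> G) (inv : G -> G) (one : G).
Hypothesis mulA : forall x y z, mul x (mul y z) = mul (mul x y) z.
Hypothesis mulC : forall x y, mul x y = mul y x.
Hypothesis mul1g : forall x, mul one x = x.
Hypothesis mulVg : forall x, mul (inv x) x = one.
Hypothesis mul_cont : continuous (fun p : G * G => mul p.1 p.2).

Lemma continuous_mull x : continuous (mul x).
Proof.
move=> h; apply: (@continuous_comp _ _ _ (pair x) (fun p : G * G => mul p.1 p.2)).
  exact: (cvg_pair (cvg_cst x) cvg_id).
exact: mul_cont.
Qed.

Lemma measurable_coset g (G0 : set G) : @measurable _ (borelG G) G0 ->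
  @measurable _ (borelG G) (coset mul g G0).
Proof.
move=> mG0.
have -> : coset mul g G0 = mul g @` G0.
  by apply/seteqP; split=> k [x G0x kE]; exists x.
rewrite (image_mul mulA mulC mul1g mulVg).
have := continuous_measurable_borelG (@continuous_mull (inv g)).
by move=> /(_ measurableT _ mG0); rewrite setTI.
Qed.

Lemma measurable_rho_set (R : realType) (d : nat) (pi : G -> 'M[R]_d)
    (G0 : set G) (I t : 'cV[R]_d) g (B : set R) :
  (forall i j, continuous (fun g => pi g i j)) ->
  @measurable _ (borelG G) G0 -> measurable B ->
  @measurable _ (borelG G) (rho_set mul pi G0 I g [set x | B (inner x t)]).
Proof.
move=> pi_cont mG0 mB; apply: measurableI; first exact: measurable_coset.
have := continuous_measurable_borelG_R (continuous_inner_rep (J:=I) (t:=t) pi_cont).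
by move=> /(_ measurableT _ mB); rewrite setTI.
Qed.

Lemma rho_mul (R : realType) (d : nat) (pi : G -> 'M[R]_d)
    (mu : probability (borelG G) R) :
  (forall x (A : set G), @measurable _ (borelG G) A -> mu (mul x @` A) = mu A) ->
  (forall g h, pi (mul g h) = pi g *m pi h) ->
  forall (G0 : set G) (I : 'cV[R]_d) g g' (A : set 'cV[R]_d),
  @measurable _ (borelG G) (rho_set mul pi G0 (pi g *m I) g' A) ->
  rho mu mul pi G0 (pi g *m I) g' A = rho mu mul pi G0 I (mul g g') A.
Proof.
move=> mu_inv pi_mul G0 I g g' A mA.
rewrite /rho -/(rho_set mul pi G0 I (mul g g') A).
by rewrite -(image_rho_set mulA mulC mul1g mulVg pi_mul) mu_inv.
Qed.

End TopologicalGroup.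

Theorem theorem10 (R : realType) (d : nat)
  (* compact (Hausdorff) Abelian topological group G *)
  (G : ptopologicalType) (mul : G -> G -> G) (inv : G -> G) (one : G)
  (mulA : forall x y z, mul x (mul y z) = mul (mul x y) z)
  (mulC : forall x y, mul x y = mul y x)
  (mul1g : forall x, mul one x = x)
  (mulVg : forall x, mul (inv x) x = one)
  (mul_cont : continuous (fun p : G * G => mul p.1 p.2))
  (inv_cont : continuous inv)
  (G_hausdorff : hausdorff_space G)
  (G_compact : compact [set: G])
  (* normalized Haar measure dg on the Borel sets of G *)
  (mu : probability (borelG G) R)
  (mu_inv : forall (x : G) (A : set G), @measurable _ (borelG G) A ->
              mu (mul x @` A) = mu A)
  (* unitary (orthogonal) continuous representation of G on R^d *)
  (pi : G -> 'M[R]_d)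
  (pi_mul : forall g h, pi (mul g h) = pi g *m pi h)
  (pi_one : pi one = 1%:M)
  (pi_orth : forall g, (pi g)^T *m pi g = 1%:M)
  (pi_cont : forall i j, continuous (fun g => pi g i j))
  (* measurable G0 with V = dg(G0) > 0 *)
  (G0 : set G) (G0_meas : @measurable _ (borelG G) G0)
  (V_pos : (0 < mu G0)%E)
  (* real separable Hilbert space H *)
  (H : completeNormedModType R) (ip : H -> H -> R)
  (ip_sym : forall x y, ip x y = ip y x)
  (ip_lin : forall (a : R) (x y z : H), ip (a *: x + y) z = a * ip x z + ip y z)
  (ip_norm : forall x, `|x| = Num.sqrt (ip x x))
  (H_sep : exists S : set H, countable S /\ closure S = [set: H])
  (* embedding Phi : P(R) -> H *)
  (Phi : (borelR R -> \bar R) -> H)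
  (Phi_inj : forall m1 m2, is_probR m1 -> is_probR m2 -> Phi m1 = Phi m2 -> m1 = m2) :
  forall (I : 'cV[R]_d) (g : G) (g' : G) (t : 'cV[R]_d), unit_sphere t ->
    Qbar mu mul pi G0 Phi (pi g *m I) g' t = Qbar mu mul pi G0 Phi I (mul g g') t.
Proof.
move=> I g g' t _.
rewrite /Qbar /JPhi /Psibar /push_inner; congr Phi; apply/funext => B.
apply: (rho_mul mulA mulC mul1g mulVg mu_inv pi_mul).
exact: (measurable_rho_set mulA mulC mul1g mulVg mul_cont _ _ _ pi_cont G0_meas
  (svalP B)).
Qed.
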